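(* Let $f$ be a germ of a holomorphic function at the origin of $\mathbb C$, let $m\in\mathbb N$ and $k\in\mathbb N$. If for every $n\ge k$ there is $R_n\in\mathcal R_{nm}$ such that $f-R_n$ vanishes to order at least $n+m+2$ at the origin, then $f\in\mathcal R_{km}$ (i.e. $f$ is the germ of a function in $\mathcal R_{km}$).
   Context: $\mathcal R_{nm}$ is the set of rational functions $P/Q$ with $P$ a polynomial of degree at most $n$ and $Q\not\equiv0$ a polynomial of degree at most $m$. *)

From HB Require Import structures.
From mathcomp Require Import all_boot all_order all_algebra.
From mathcomp Require Import reals.
From mathcomp Require Import complex.
Set Implicit Arguments. Unset Strict Implicit. Unset Printing Implicit Defensive.
Import Order.TTheory GRing.Theory Num.Theory.
Local Open Scope ring_scope.
Local Open Scope complex_scope.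

(* A holomorphic germ at 0 in C is represented by its Taylor coefficient
   sequence a : nat -> C (C = R[i], R a real field of reals), required to have
   positive radius of convergence. *)
Definition convergent_germ (R : realType) (a : nat -> R[i]) : Prop :=
  exists r : R, (0 < r)%R /\ exists M : R,
    forall n, (`|a n| * (r ^+ n)%:C <= M%:C).

Definition in_Rnm (R : realType) (n m : nat) (P Q : {poly R[i]}) : Prop :=
  (size P <= n.+1)%N /\ (size Q <= m.+1)%N /\ Q != 0.

Definition poly_ord (R : realType) (Q : {poly R[i]}) : nat :=
  find (fun c => c != 0) Q.

Definition QfP_coef (R : realType) (a : nat -> R[i]) (P Q : {poly R[i]}) (i : nat)
  : R[i] := \sum_(j < i.+1) Q`_j * a (i - j)%N - P`_i.

(* the meromorphic germ f - P/Q vanishes to order at least N at 0: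
   writing Q = z^s Q1 with Q1(0) <> 0 (s = poly_ord Q), this means that the
   power series Q f - P vanishes to order at least N + s. *)
Definition diff_vanishes_order (R : realType) (a : nat -> R[i])
  (P Q : {poly R[i]}) (N : nat) : Prop :=
  forall i, (i < N + poly_ord Q)%N -> QfP_coef a P Q i = 0.

(* f is (the germ of) the rational function P/Q with (P,Q) in R_{km}:
   as germs at 0, f = P/Q, i.e. Q f = P as power series. *)
Definition germ_in_Rnm (R : realType) (n m : nat) (a : nat -> R[i]) : Prop :=
  exists P Q : {poly R[i]}, in_Rnm n m P Q /\ forall i, QfP_coef a P Q i = 0.

(* Consecutive approximants agree: for (P, Q) of type (n, m) and (P', Q') of type
   (n + 1, m), Q P' - Q' P = Q' (Q f - P) - Q (Q' f - P') is a polynomial of degree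
   at most n + m + 1 divisible by z^(n + m + 2), hence zero.  So every P_n / Q_n
   equals P_k / Q_k, and Q_n (Q_k f - P_k) = Q_k (Q_n f - P_n) vanishes to order
   n + m + 2 + ord Q_n; cancelling Q_n = z^(ord Q_n) Q1 with Q1(0) <> 0 shows that
   Q_k f - P_k vanishes to order n + m + 2 for every n, i.e. Q_k f = P_k. *)

From HB Require Import structures.
From mathcomp Require Import all_boot all_order all_algebra.
From mathcomp Require Import reals complex.
From mathcomp Require Import zify ring.
Set Implicit Arguments. Unset Strict Implicit. Unset Printing Implicit Defensive.
Local Open Scope ring_scope.
Import GRing.Theory.

Section XnDivisibility.
Variable F : idomainType.
Implicit Types p q g : {poly F}.

Lemma take_poly_eq0 n p : (forall i, (i < n)%N -> p`_i = 0) -> take_poly n p = 0.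
Proof.
by move=> p_lo; apply/polyP => i; rewrite coef_take_poly coef0; case: ifP => // /p_lo.
Qed.

Lemma dvdp_XnP n p : reflect (forall i, (i < n)%N -> p`_i = 0) ('X^n %| p).
Proof.
apply: (iffP idP) => [/(Pdiv.IdomainMonic.dvdpP (monicXn _ n)) [r ->] i lt_in|p_lo].
  by rewrite coefMXn lt_in.
by rewrite -(poly_take_drop n p) take_poly_eq0 // add0r dvdp_mulIr.
Qed.

Lemma dvdp_Xn_size_eq0 n p : 'X^n %| p -> (size p <= n)%N -> p = 0.
Proof.
move=> dvd_p size_p; apply/eqP; apply: contraTT size_p => p_neq0.
by rewrite -ltnNge -(size_polyXn F n) dvdp_leq.
Qed.

Lemma dvdp_Xn_cancel n s q g :
  ~~ root q 0 -> 'X^(n + s) %| q * 'X^s * g -> 'X^n %| g.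
Proof.
move=> q0_neq0; rewrite exprD mulrAC dvdp_mul2r ?monic_neq0 ?monicXn //.
by rewrite Gauss_dvdpr // coprimep_expl // coprimep_sym coprimepX.
Qed.

Lemma cross_mul_trans (p1 q1 p2 q2 p3 q3 : F) :
  q2 != 0 -> q2 * p1 = q1 * p2 -> q2 * p3 = q3 * p2 -> q3 * p1 = q1 * p3.
Proof.
move=> q2_neq0 e12 e32; apply: (mulfI q2_neq0).
by rewrite mulrCA e12 mulrCA -e32 mulrCA.
Qed.

End XnDivisibility.

Section PadeApproximants.
Variable R : realType.
Implicit Types (a : nat -> R[i]) (P Q : {poly R[i]}).

Lemma poly_ord_factor Q :
  Q != 0 -> exists2 Q1, Q = Q1 * 'X^(poly_ord Q) & ~~ root Q1 0.
Proof.
move=> Q_neq0; set s := poly_ord Q.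
have has_nz : has (fun c => c != 0) Q.
  apply/hasP; exists (lead_coef Q); last by rewrite lead_coef_eq0.
  by rewrite /lead_coef mem_nth // prednK // size_poly_gt0.
have take0 : take_poly s Q = 0.
  by apply: take_poly_eq0 => i lt_is; apply/eqP/negbFE; apply: (before_find 0 lt_is).
exists (drop_poly s Q); first by rewrite -[LHS](poly_take_drop s) take0 add0r.
by rewrite /root horner_coef0 coef_drop_poly add0n; apply: (nth_find 0 has_nz).
Qed.

Lemma dvdp_Xn_cancel_ord n Q g :
  Q != 0 -> 'X^(n + poly_ord Q) %| Q * g -> 'X^n %| g.
Proof.
case/poly_ord_factor=> Q1 eQ nroot_Q1; rewrite [in X in X * g]eQ.
exact: dvdp_Xn_cancel.
Qed.

(* Truncating [f] at any order [M >= N] does not change [Q f - P] below order [N]: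
   this is how the power series is replaced by a polynomial throughout. *)
Lemma dvdp_Xn_truncP a P Q N M : (N <= M)%N ->
  reflect (forall i, (i < N)%N -> QfP_coef a P Q i = 0)
          ('X^N %| Q * \poly_(j < M) a j - P).
Proof.
move=> le_NM.
have coefE i : (i < N)%N -> (Q * \poly_(j < M) a j - P)`_i = QfP_coef a P Q i.
  move=> lt_iN; rewrite coefB coefM /QfP_coef; congr (_ - _); apply: eq_bigr => j _.
  by rewrite coef_poly (leq_ltn_trans (leq_subr _ _) (leq_trans lt_iN le_NM)).
apply: (iffP (dvdp_XnP _ _)) => vanish i lt_iN.
  by rewrite -coefE ?vanish.
by rewrite coefE ?vanish.
Qed.

Lemma diff_vanishes_orderW a P Q N N' :
  (N' <= N)%N -> diff_vanishes_order a P Q N -> diff_vanishes_order a P Q N'.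
Proof.
by move=> le_N'N vanish i lt_i; apply/vanish/(leq_trans lt_i); rewrite leq_add2r.
Qed.

Lemma pade_cross_eq a n m P Q P' Q' :
  (size P <= n.+2)%N -> (size Q <= m.+1)%N -> diff_vanishes_order a P Q (n + m + 2) ->
  (size P' <= n.+2)%N -> (size Q' <= m.+1)%N -> diff_vanishes_order a P' Q' (n + m + 2) ->
  Q * P' = Q' * P.
Proof.
move=> sP sQ vanish sP' sQ' vanish'; set N := (n + m + 2)%N.
have trunc_dvd P1 Q1 :
    diff_vanishes_order a P1 Q1 N -> 'X^N %| Q1 * \poly_(j < N) a j - P1.
  by move=> vanish1; apply/dvdp_Xn_truncP => // i lt_iN; apply/vanish1/ltn_addr.
have size_cross P1 Q1 :
    (size P1 <= n.+2)%N -> (size Q1 <= m.+1)%N -> (size (Q1 * P1)%R <= N)%N.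
  by move=> sP1 sQ1; apply: leq_trans (size_polyMleq _ _) _; rewrite /N; lia.
apply/eqP; rewrite -subr_eq0; apply/eqP/(dvdp_Xn_size_eq0 (n := N)).
  have -> : Q * P' - Q' * P =
      Q' * (Q * \poly_(j < N) a j - P) - Q * (Q' * \poly_(j < N) a j - P') by ring.
  by apply: dvdp_sub; apply: dvdp_mull; apply: trunc_dvd.
by apply: leq_trans (size_polyD _ _) _; rewrite size_polyN geq_max !size_cross.
Qed.

Lemma QfP_coef_cross_eq0 a N P Q P' Q' :
  Q != 0 -> Q * P' = Q' * P -> diff_vanishes_order a P Q N ->
  forall i, (i < N)%N -> QfP_coef a P' Q' i = 0.
Proof.
move=> Q_neq0 cross vanish; set F := \poly_(j < N + poly_ord Q) a j.
apply/(dvdp_Xn_truncP _ _ _ (leq_addr (poly_ord Q) N)).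
apply: (dvdp_Xn_cancel_ord Q_neq0).
have -> : Q * (Q' * F - P') = Q' * (Q * F - P) by rewrite !mulrBr cross mulrCA.
by apply/dvdp_mull/dvdp_Xn_truncP.
Qed.

Section PadeTable.
Variables (a : nat -> R[i]) (m k : nat).
Hypothesis pade : forall n, (k <= n)%N ->
  exists P Q, in_Rnm n m P Q /\ diff_vanishes_order a P Q (n + m + 2).

Lemma pade_table_cross_eq Pk Qk n P Q : (k <= n)%N ->
  in_Rnm k m Pk Qk -> diff_vanishes_order a Pk Qk (k + m + 2) ->
  in_Rnm n m P Q -> diff_vanishes_order a P Q (n + m + 2) ->
  Q * Pk = Qk * P.
Proof.
move=> le_kn [sPk [sQk _]] vanish_k; rewrite -(subnKC le_kn).
elim: (n - k)%N P Q => [|d IH] P Q [sP [sQ _]] vanish.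
  rewrite addn0 in sP vanish.
  by apply: (pade_cross_eq (n := k) (m := m) (a := a)) => //; apply: ltnW.
have [P0 [Q0 [PQ0 vanish0]]] := pade (leq_addr d k).
have [sP0 [sQ0 Q0_neq0]] := PQ0.
apply: (cross_mul_trans Q0_neq0 (IH P0 Q0 PQ0 vanish0)).
apply: (pade_cross_eq (n := (k + d)%N) (m := m) (a := a)) => //; first exact: ltnW.
  by rewrite -addnS.
by apply: diff_vanishes_orderW vanish; rewrite leq_add2r leq_add2r addnS.
Qed.

End PadeTable.
End PadeApproximants.

Theorem proposition3p5 (R : realType) (a : nat -> R[i]) (m k : nat) :
  convergent_germ a ->
  (forall n : nat, (k <= n)%N ->
     exists P Q : {poly R[i]}, in_Rnm n m P Q /\ diff_vanishes_order a P Q (n + m + 2)) ->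
  germ_in_Rnm k m a.
Proof.
move=> _ pade.
have [Pk [Qk [PQk vanish_k]]] := pade k (leqnn k).
exists Pk, Qk; split=> // i.
have [P [Q [PQ vanish]]] := pade (k + i)%N (leq_addr i k).
have cross : Q * Pk = Qk * P.
  exact: (pade_table_cross_eq pade (leq_addr i k) PQk vanish_k PQ vanish).
by apply: (QfP_coef_cross_eq0 PQ.2.2 cross vanish); lia.
Qed.
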